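(* Let $\mathcal{P}\subseteq\mathcal{S}\subseteq\mathcal{T}$ be group properties. If for every $G\in\mathcal{S}$ there exists $H\in\mathcal{P}$ such that the group $(\mathbb{N},G)$ embeds (as a group) into $(\mathbb{N},H)$, then $\mathcal{P}$ is dense in $\mathcal{S}$.
   Context: Let $\mathbb{N}^{\mathbb{N}\times\mathbb{N}}$ be the space of functions $\mathbb{N}\times\mathbb{N}\to\mathbb{N}$ with the product of discrete topologies. Let $\mathcal{A}=\{G\in\mathbb{N}^{\mathbb{N}\times\mathbb{N}}: G \text{ is an abelian group operation on } \mathbb{N} \text{ with identity element } 0\}$ and $\mathcal{T}=\{G\in\mathcal{A}: (\mathbb{N},G)\text{ is torsion-free}\}$, with the subspace topology. A set $\mathcal{P}\subseteq\mathcal{T}$ is a group property if it is isomorphism invariant: for any $G\in\mathcal{T}$, if $(\mathbb{N},G)$ is isomorphic to $(\mathbb{N},H)$ for some $H\in\mathcal{P}$, then $G\in\mathcal{P}$. *)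

From Stdlib Require Import List.
Import ListNotations.

Definition op := (nat * nat)%type -> nat.

Definition is_abelian_group_op (G : op) : Prop :=
  (forall x y z, G (G (x, y), z) = G (x, G (y, z))) /\
  (forall x y, G (x, y) = G (y, x)) /\
  (forall x, G (0, x) = x) /\
  (forall x, exists y, G (x, y) = 0).

Fixpoint mult (G : op) (n x : nat) : nat :=
  match n with
  | 0 => 0
  | S k => G (x, mult G k x)
  end.

Definition torsion_free (G : op) : Prop :=
  forall x n, x <> 0 -> 0 < n -> mult G n x <> 0.

Definition in_A (G : op) : Prop := is_abelian_group_op G.
Definition in_T (G : op) : Prop := in_A G /\ torsion_free G.

Definition is_hom (G H : op) (f : nat -> nat) : Prop :=
  forall x y, f (G (x, y)) = H (f x, f y).

Definition isomorphic (G H : op) : Prop :=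
  exists f : nat -> nat, is_hom G H f /\
    (forall x y, f x = f y -> x = y) /\ (forall y, exists x, f x = y).

Definition embeds (G H : op) : Prop :=
  exists f : nat -> nat, is_hom G H f /\ (forall x y, f x = f y -> x = y).

Definition group_property (P : op -> Prop) : Prop :=
  (forall G, P G -> in_T G) /\
  (forall G H, in_T G -> P H -> isomorphic G H -> P G).

(** Product of discrete topologies on N^(N x N): the basic open sets are the
    cylinders [{H | forall p in F, H p = G p}] for a finite set F of
    coordinates.  [P] is dense in [S] (w.r.t. the subspace topology) iff every
    basic open set meeting [S] meets [P], i.e. every point of [S] is in the
    closure of [P]. *)
Definition dense_in (P S : op -> Prop) : Prop :=
  forall G, S G -> forall F : list (nat * nat),
    exists H, P H /\ forall p, In p F -> H p = G p.

From Stdlib Require Import List Arith.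
Import ListNotations.

(* Let G be in S and F a finite set of coordinates.  By hypothesis there is an
   H in P and an embedding f : (N,G) -> (N,H).  An injection of N agrees with
   some bijection s of N on any given finite set D (built from transpositions);
   we take D to contain 0 and, for every (a,b) in F, the points a, b, G(a,b).
   Transporting H along s gives the operation H'(x,y) = s^-1 (H (s x, s y)),
   which is an abelian torsion-free group isomorphic to (N,H) via s, hence in
   P because P is a group property.  On every (a,b) in F we get
   H'(a,b) = s^-1 (H (f a, f b)) = s^-1 (f (G(a,b))) = G(a,b), so H' lies in
   the basic open neighbourhood of G determined by F. *)

Definition transposition (a b y : nat) : nat :=
  if Nat.eq_dec y a then b else if Nat.eq_dec y b then a else y.

Lemma transposition_involutive a b y :
  transposition a b (transposition a b y) = y.
Proof.
  unfold transposition; repeat (destruct Nat.eq_dec; subst; try congruence).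
Qed.

(* Every injection of nat agrees with a bijection (given with its inverse) on
   any finite list of points: add the points one at a time, correcting the
   bijection by a transposition. *)
Lemma injection_agrees_with_bijection (f : nat -> nat)
  (finj : forall x y, f x = f y -> x = y) :
  forall D : list nat, exists s t : nat -> nat,
    (forall x, t (s x) = x) /\ (forall y, s (t y) = y) /\
    (forall d, In d D -> s d = f d).
Proof.
  induction D as [|x D IH].
  - exists (fun x => x), (fun x => x); repeat split; auto. intros d [].
  - destruct IH as [s [t [ts [st sf]]]].
    destruct (in_dec Nat.eq_dec x D) as [Hin|Hnin].
    + exists s, t; repeat split; auto.
      intros d [<-|Hd]; auto.
    + exists (fun y => transposition (s x) (f x) (s y)),
             (fun y => t (transposition (s x) (f x) y)).
      repeat split.
      * intros y; rewrite transposition_involutive; auto.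
      * intros y; rewrite st, transposition_involutive; auto.
      * intros d [<-|Hd]; unfold transposition.
        -- destruct Nat.eq_dec; congruence.
        -- assert (Hdx : d <> x) by (intro; subst; contradiction).
           rewrite (sf d Hd).
           destruct Nat.eq_dec as [e|]; [|destruct Nat.eq_dec as [e|]; auto].
           ++ (* s d = s x would force d = x *)
              rewrite <- (sf d Hd) in e.
              elim Hdx; rewrite <- (ts d), e; auto.
           ++ elim Hdx; auto.
Qed.

(* A homomorphism from an operation with left identity 0 into an abelian
   group with identity 0 maps 0 to 0 (f 0 is idempotent, hence trivial). *)
Lemma hom_zero (G H : op) (f : nat -> nat) :
  (forall x, G (0, x) = x) -> in_A H -> is_hom G H f -> f 0 = 0.
Proof.
  intros G0 [Ha [Hc [H0 Hi]]] fhom.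
  destruct (Hi (f 0)) as [y Hy].
  assert (idem : f 0 = H (f 0, f 0)) by (rewrite <- fhom, G0; auto).
  rewrite <- Hy at 2. rewrite idem at 2. rewrite Ha, Hy, Hc, H0. reflexivity.
Qed.

Section Transport.

Variables s t : nat -> nat.
Hypothesis ts : forall x, t (s x) = x.
Hypothesis st : forall y, s (t y) = y.

Definition transport (H : op) : op := fun p => t (H (s (fst p), s (snd p))).

Lemma transport_isomorphic (H : op) : isomorphic (transport H) H.
Proof.
  exists s; repeat split.
  - intros x y; unfold transport; simpl; rewrite st; auto.
  - intros x y e; rewrite <- (ts x), e; auto.
  - intros y; exists (t y); auto.
Qed.

Hypothesis s0 : s 0 = 0.

Lemma transport_in_A (H : op) : in_A H -> in_A (transport H).
Proof.
  intros [Ha [Hc [H0 Hi]]]; unfold transport; repeat split; simpl.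
  - intros x y z; rewrite !st, Ha; auto.
  - intros x y; rewrite Hc; auto.
  - intros x; rewrite s0, H0, ts; auto.
  - intros x; destruct (Hi (s x)) as [y Hy]; exists (t y).
    rewrite st, Hy, <- s0, ts; auto.
Qed.

Lemma mult_transport (H : op) n x :
  mult (transport H) n x = t (mult H n (s x)).
Proof.
  induction n; simpl.
  - rewrite <- s0, ts; auto.
  - unfold transport at 1; simpl; rewrite IHn, st; auto.
Qed.

Lemma transport_in_T (H : op) : in_T H -> in_T (transport H).
Proof.
  intros [HA Htf]; split; [now apply transport_in_A|].
  intros x n Hx Hn e.
  rewrite mult_transport in e.
  apply (Htf (s x) n); auto.
  - intro e'; apply Hx; rewrite <- (ts x), e', <- s0, ts; auto.
  - rewrite <- (st (mult H n (s x))), e; auto.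
Qed.

End Transport.

Lemma transport_agrees (G H : op) (f s t : nat -> nat) a b :
  (forall x, t (s x) = x) -> is_hom G H f ->
  s a = f a -> s b = f b -> s (G (a, b)) = f (G (a, b)) ->
  transport s t H (a, b) = G (a, b).
Proof.
  intros ts fhom sa sb sab; unfold transport; simpl.
  rewrite sa, sb, <- fhom, <- sab; apply ts.
Qed.

Theorem lemma2p8 (P S : op -> Prop) :
  group_property P -> group_property S ->
  (forall G, P G -> S G) ->
  (forall G, S G -> exists H, P H /\ embeds G H) ->
  dense_in P S.
Proof.
  intros [PT Piso] [ST _] _ Hemb G SG F.
  destruct (Hemb G SG) as [H [PH [f [fhom finj]]]].
  assert (f0 : f 0 = 0).
  { destruct (ST G SG) as [[_ [_ [G0 _]]] _].
    exact (hom_zero G H f G0 (proj1 (PT H PH)) fhom). }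
  destruct (injection_agrees_with_bijection f finj
              (0 :: flat_map (fun p => [fst p; snd p; G p]) F))
    as [s [t [ts [st sf]]]].
  assert (s0 : s 0 = 0) by (rewrite sf; simpl; auto).
  exists (transport s t H); split.
  - apply (Piso _ H); auto.
    + exact (transport_in_T s t ts st s0 H (PT H PH)).
    + exact (transport_isomorphic s t ts st H).
  - intros [a b] Hp.
    apply (transport_agrees G H f); auto;
      apply sf; right; apply in_flat_map; exists (a, b); simpl; auto.
Qed.
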